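(* The set $\mathcal{AN}_{\operatorname{add}(\mathcal N)}$ is strongly $\mathfrak c$-algebrable in $\left(\mathbb R^{\mathbb R}\right)^{\operatorname{add}(\mathcal N)}$ (in ZFC).
   Context: For a regular infinite cardinal $\kappa$, a $\kappa$-sequence $(x_\alpha)_{\alpha<\kappa}$ converges to $x$ if for every neighbourhood $U$ of $x$ there is $\alpha_0<\kappa$ with $x_\alpha\in U$ for all $\alpha_0<\alpha<\kappa$; $\left(\mathbb R^{\mathbb R}\right)^{\kappa}$ is the commutative real algebra of $\kappa$-sequences of functions $\mathbb R\to\mathbb R$ with indexwise operations. $\operatorname{add}(\mathcal N)$ is the least cardinality of a family of Lebesgue null sets whose union is not null. $\mathcal{AN}_{\kappa}$: $\kappa$-sequences of Lebesgue measurable functions $f_\alpha:\mathbb R\to\mathbb R$ converging pointwise a.e. to a function that is not Lebesgue measurable. $S$ is strongly $\mu$-algebrable if there is a set $X$ of $\mu$ algebraically independent elements such that every nonzero element of the (non-unital) algebra generated by $X$ belongs to $S$. *)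

Set Warnings "-all".
From mathcomp Require Import all_boot all_order all_algebra.
From mathcomp Require Import mpoly.
From mathcomp Require Import all_classical all_reals all_analysis.
Set Implicit Arguments. Unset Strict Implicit. Unset Printing Implicit Defensive.
Import Order.TTheory GRing.Theory Num.Theory numFieldNormedType.Exports.
Local Open Scope classical_set_scope.
Local Open Scope ring_scope.
Local Open Scope card_scope.

(* The real line with the Lebesgue (= completed, Caratheodory) sigma-algebra. *)
Definition lebesgueR (R : realType) :=
  caratheodory_type ((wlength (R:=R) idfun)^*)%mu.

Definition Lmeasurable_fun (R : realType) (f : R -> R) : Prop :=
  @measurable_fun _ _ (lebesgueR R) R [set: lebesgueR R] f.

Definition Lnull (R : realType) (A : set R) : Prop :=
  (@lebesgue_measure R).-negligible A.

Definition strict_wellorder (K : Type) (lt : K -> K -> Prop) : Prop :=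
  [/\ forall a, ~ lt a a,
      forall a b c, lt a b -> lt b c -> lt a c,
      forall a b, [\/ lt a b, a = b | lt b a]
    & well_founded lt].

(* (K, lt) is (order-isomorphic to) an initial ordinal, i.e. a cardinal
   viewed as an ordinal: every proper initial segment has smaller cardinality. *)
Definition initial_ordinal (K : Type) (lt : K -> K -> Prop) : Prop :=
  strict_wellorder lt /\
  forall a : K, ~ ([set: K] #<= [set b | lt b a]).

(* The cardinality of K is add(N): some K-indexed family of null sets has a
   non-null union, and every family of null sets of cardinality < |K| has a
   null union. *)
Definition card_is_addN (R : realType) (K : Type) : Prop :=
  (exists F : K -> set R, (forall a, Lnull (F a)) /\ ~ Lnull (\bigcup_a F a)) /\
  (forall FF : set (set R),
      FF #<= [set: K] -> ~ ([set: K] #<= FF) ->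
      (forall A, FF A -> Lnull A) -> Lnull (\bigcup_(A in FF) A)).

Definition kconverges (R : realType) (K : Type) (lt : K -> K -> Prop)
    (x : K -> R) (l : R) : Prop :=
  forall U : set R, nbhs l U ->
    exists a0 : K, forall a, lt a0 a -> U (x a).

Definition AN (R : realType) (K : Type) (lt : K -> K -> Prop)
    (f : K -> R -> R) : Prop :=
  (forall a, Lmeasurable_fun (f a)) /\
  exists g : R -> R, ~ Lmeasurable_fun g /\
    {ae (@lebesgue_measure R), forall t, kconverges lt (fun a => f a t) (g t)}.

(* Evaluation of a polynomial in n variables at elements of the commutative
   algebra (R^R)^K with indexwise (and pointwise) operations. *)
Definition peval (R : realType) (K : Type) (n : nat)
    (P : mpoly.mpoly n R) (x : 'I_n -> K -> R -> R) : K -> R -> R :=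
  fun a t => mpoly.meval (fun i => x i a t) P.

(* S is strongly mu-algebrable in (R^R)^K, with mu the cardinality of the set M:
   there is a set X of cardinality |M| of algebraically independent elements
   such that every nonzero element of the (non-unital) algebra generated by X
   lies in S. *)
Definition strongly_algebrable (R : realType) (K : Type) (M : Type)
    (S : set (K -> R -> R)) : Prop :=
  exists X : set (K -> R -> R),
    X #= [set: M] /\
    (forall (n : nat) (x : 'I_n -> K -> R -> R) (P : mpoly.mpoly n R),
        injective x -> (forall i, X (x i)) -> P != 0 ->
        peval P x <> (fun _ _ => 0)) /\
    (forall (n : nat) (x : 'I_n -> K -> R -> R) (P : mpoly.mpoly n R),
        (forall i, X (x i)) -> mpoly.mcoeff (@mpoly.mnm0 n) P = 0 ->
        peval P x <> (fun _ _ => 0) -> S (peval P x)).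

From mathcomp Require Import all_boot all_order all_algebra.
From mathcomp Require Import mpoly.
From mathcomp Require Import all_classical all_reals all_analysis.
From mathcomp Require Import lra.
Import Order.TTheory GRing.Theory Num.Theory numFieldNormedType.Exports.
Local Open Scope classical_set_scope.
Local Open Scope ring_scope.

(* Let (F a) be null sets indexed by add(N) whose union is not null.  The sets
   N a := \bigcup_(b < a) F b are null, increase with a, and cover a non-null
   set, which therefore contains a bounded non-measurable Vitali set V.  Take
   countably many disjoint translates V + c_k of V and an enumeration (H_k) of
   the rational step functions.  At stage a, the generator indexed by r equals
   H_k(r) on the points of V + c_k that lie in N a + c_k, and 0 elsewhere.  A
   polynomial P without constant term in r_1, ..., r_n has the same shape, with
   H_k(r) replaced by Psi k := P(H_k(r_1), ..., H_k(r_n)): each stage vanishes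
   off a null set, hence is measurable, and the stages converge everywhere to
   the function equal to Psi k on V + c_k, which is not measurable as soon as
   Psi is not 0.  Rational step functions take arbitrary prescribed rational
   values at finitely many distinct points, so Psi = 0 forces P = 0: this gives
   algebraic independence. *)

Lemma mmap_muni (R S : comNzRingType) (f : {rmorphism R -> S}) n
    (h : 'I_n.+1 -> S) (p : {mpoly R[n.+1]}) :
  mmap f h p =
  (map_poly (mmap f (fun i => h (widen_ord (leqnSn n) i))) (muni p)).[h ord_max].
Proof.
rewrite muniE [in LHS](mpolyE p) !raddf_sum /= horner_sum.
apply: eq_bigr => m _.
rewrite mmapZ mmapX -mul_polyC rmorphM /= map_polyC map_polyXn hornerE.
rewrite hornerXn /= mmapZ mmapX /mmap1 big_ord_recr /= -mulrA; congr (_ * (_ * _)).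
by apply: eq_bigr => i _; rewrite mnmE.
Qed.

Lemma poly_ratr_eq0 (R : numFieldType) (u : {poly R}) :
  (forall q : rat, u.[ratr q] = 0) -> u = 0.
Proof.
move=> u_rat0; apply/eqP; apply: contraT => u0.
have := @max_poly_roots _ u [seq i%:R | i <- iota 0 (size u)] u0.
rewrite size_map size_iota ltnn; apply.
  by apply/allP => _ /mapP [i _ ->]; apply/rootP; rewrite -(ratr_nat R i).
by rewrite map_inj_uniq ?iota_uniq // => i j /eqP; rewrite eqr_nat => /eqP.
Qed.

Lemma mpoly_ratr_eq0 (R : numFieldType) n (p : {mpoly R[n]}) :
  (forall w : 'I_n -> rat, p.@[fun i => ratr (w i)] = 0) -> p = 0.
Proof.
elim: n p => [|n IH] p p_rat0.
  have := p_rat0 (fun=> 0); rewrite {1}(nvar0_mpolyC p) mevalC => p0.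
  by rewrite (nvar0_mpolyC p) p0.
suff muni0 : muni p = 0.
  by rewrite -[p]comp_mpoly_id /comp_mpoly /= mmap_muni muni0 rmorph0 horner0.
apply/polyP => k; rewrite coef0; apply: IH => w.
suff u0 : map_poly (meval (fun i => ratr (w i))) (muni p) = 0.
  by have := congr1 (fun v : {poly R} => v`_k) u0; rewrite coef_map coef0.
apply: poly_ratr_eq0 => q.
pose w' (i : 'I_n.+1) := if unlift ord_max i is Some j then w j else q.
have := p_rat0 w'; rewrite /meval mmap_muni.
have -> : (fun i : 'I_n => ratr (w' (widen_ord (leqnSn n) i)) : R) =
          (fun i => ratr (w i)).
  apply: funext => i; have -> : widen_ord (leqnSn n) i = lift ord_max i.
    by apply: val_inj; rewrite /= /bump leqNgt ltn_ord.
  by rewrite /w' liftK.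
by rewrite /w' unlift_none.
Qed.

Lemma meval_cst0 (R : comNzRingType) n (p : {mpoly R[n]}) :
  p.@[fun=> 0] = p@_0%MM.
Proof.
rewrite [in LHS](mpolyE p) [in RHS](mpolyE p) !raddf_sum /=.
apply: eq_bigr => m _; rewrite mevalZ mevalX mcoeffZ mcoeffX; congr (_ * _).
have [->|/eqP m0] := eqVneq m 0%MM.
  by rewrite big1 // => i _; rewrite mnm0E.
have [i mi] : exists i, m i != 0%N.
  by apply/existsP; apply: contra_notT m0 => /existsPn mi0; apply/mnmP => i;
    rewrite mnm0E; apply/eqP; rewrite -[_ == _]negbK mi0.
by rewrite (bigD1 i) //= expr0n (negbTE mi) mul0r.
Qed.

Section rational_step_functions.
Context {R : realType}.

Definition ratstep (d : nat) (r : R) : R :=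
  if (unpickle d : option (seq (rat * rat * rat))) is Some s then
    \sum_(x <- s) (if ratr x.1.1 < r < ratr x.1.2 then ratr x.2 else 0)
  else 0.

Lemma exists_rat_itv_isolating n (r : 'I_n -> R) (i : 'I_n) : injective r ->
  exists lh : rat * rat, ratr lh.1 < r i < ratr lh.2 /\
    forall j, j != i -> ~~ (ratr lh.1 < r j < ratr lh.2).
Proof.
move=> rinj; pose e := \big[Order.min/1]_(j | j != i) `|r i - r j|.
have e0 : 0 < e.
  apply: lt_bigmin => // j ji; rewrite normr_gt0 subr_eq0.
  by apply: contra ji => /eqP /rinj ->.
have [lo] := @rat_in_itvoo R (r i - e) (r i) ltac:(by rewrite ltrBlDr ltrDl).
have [hi] := @rat_in_itvoo R (r i) (r i + e) ltac:(by rewrite ltrDl).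
rewrite !in_itv /= => /andP [h1 h2] /andP [l1 l2].
exists (lo, hi); split => /=; first by rewrite l2 h1.
move=> j ji; apply/negP => /andP [j1 j2].
have : e <= `|r i - r j| by exact: (bigmin_le_cond 1 (fun j => `|r i - r j|) ji).
by rewrite leNgt ltr_norml; apply/negP/negPn/andP; split; lra.
Qed.

Lemma ratstep_interp n (r : 'I_n -> R) (w : 'I_n -> rat) : injective r ->
  exists d, forall i, ratstep d (r i) = ratr (w i).
Proof.
move=> rinj; have [lh lhP] := choice (fun i => exists_rat_itv_isolating _ r i rinj).
exists (pickle [seq ((lh i).1, (lh i).2, w i) | i <- enum 'I_n]) => i.
rewrite /ratstep pickleK big_map big_enum /= (bigD1 i) //= (lhP i).1.
by rewrite big1 ?addr0 // => j ji; rewrite (negbTE ((lhP j).2 i _)) // eq_sym.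
Qed.

End rational_step_functions.

Section translation.
Context {R : realType}.
Local Notation lstar := ((wlength (R:=R) idfun)^*)%mu.

Definition translate (c : R) (A : set R) : set R := [set t | A (t - c)].

Lemma translateK c A : translate (- c) (translate c A) = A.
Proof. by apply/seteqP; split => t; rewrite /translate /= opprK addrK. Qed.

Lemma ocitv_translate c (A : set (ocitv_type R)) : ocitv A ->
  ocitv (translate c A : set (ocitv_type R)) /\
  wlength idfun (translate c A : set (ocitv_type R)) = wlength idfun A.
Proof.
move=> /ocitvP [->|[[a b] /= ab ->]].
  have -> : translate c set0 = set0 by apply/seteqP; split => t.
  by split => //; exact: ocitv0.
have -> : translate c `]a, b]%classic = `]a + c, b + c]%classic.
  by apply/seteqP; split => t; rewrite /translate /= !in_itv /= ltrBrDr lerBlDr.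
split; first exact: is_ocitv.
rewrite !wlength_itv /= !lte_fin ltrD2r ab.
by congr (_%:E); rewrite /= opprD addrACA subrr addr0.
Qed.

Lemma outer_translate_le c (A : set R) :
  (lstar (translate c A : set (ocitv_type R)) <= lstar A)%E.
Proof.
apply: le_ereal_inf => _ [F [mF AF] <-].
exists (fun k => translate c (F k)).
  split; first by move=> k; have [] := ocitv_translate c _ (mF k).
  by move=> t /= /AF [k _ Fk]; exists k.
by apply: eq_eseriesr => k _; have [] := ocitv_translate c _ (mF k).
Qed.

Lemma outer_translate c (A : set R) :
  lstar (translate c A : set (ocitv_type R)) = lstar A.
Proof.
apply/eqP; rewrite eq_le outer_translate_le /=.
by rewrite -{1}(translateK c A) outer_translate_le.
Qed.

Lemma caratheodory_translate c (A : set R) :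
  lstar.-caratheodory (translate c A) <-> lstar.-caratheodory A.
Proof.
suff cara_tr d B : lstar.-caratheodory B -> lstar.-caratheodory (translate d B).
  by split => [/(cara_tr (- c))|/cara_tr//]; rewrite translateK.
move=> cB X; have := cB (translate (- d) X).
have trI C : X `&` translate d C = translate d (translate (- d) X `&` C).
  by apply/seteqP; split => t; rewrite /translate /= opprK subrK.
by rewrite trI (trI (~` B)) !outer_translate.
Qed.

Lemma sum_cst_bounded_eq0 (x : \bar R) (M : R) : (0 <= x)%E ->
  (forall N, (\sum_(0 <= i < N) x <= M%:E)%E) -> x = 0%E.
Proof.
case: x => [r| |] //= r0 xM; last by have := xM 1%N; rewrite big_nat1.
have [->//|r_neq0] := eqVneq r 0; exfalso.
have {r0 r_neq0} r_gt0 : 0 < r by rewrite lt_def r_neq0 -lee_fin.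
have M_ge0 : 0 <= M by rewrite -lee_fin (le_trans _ (xM 0%N)) // big_geq.
have := xM (Num.Def.archi_bound (M / r)).
rewrite sumEFin lee_fin sumr_const_nat subn0 -mulr_natr.
have := archi_boundP (divr_ge0 M_ge0 (ltW r_gt0)).
by rewrite ltr_pdivrMr // mulrC => h1 h2; have := lt_le_trans h1 h2; rewrite ltxx.
Qed.

Definition rat_equiv (x y : R) := exists q : rat, x - y = ratr q.

Lemma rat_transversal (E : set R) : exists V : set R, [/\ V `<=` E,
    forall x, E x -> exists2 v, V v & rat_equiv x v
  & forall v w, V v -> V w -> rat_equiv v w -> v = w].
Proof.
have equiv_refl x : rat_equiv x x by exists 0; rewrite subrr rmorph0.
have equiv_sym x y : rat_equiv x y -> rat_equiv y x.
  by move=> [q e]; exists (- q); rewrite rmorphN /= -e opprB.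
have equiv_trans x y z : rat_equiv x y -> rat_equiv y z -> rat_equiv x z.
  by move=> [q e] [q' e']; exists (q + q'); rewrite rmorphD /= -e -e' addrA subrK.
pose C x := [set y | E y /\ rat_equiv x y].
have C_eq x y : rat_equiv x y -> C x = C y.
  move=> xy; apply/seteqP; split => z [Ez r]; split => //.
    exact: equiv_trans (equiv_sym _ _ xy) r.
  exact: equiv_trans xy r.
pose rep x := xget 0 (C x).
exists [set y | E y /\ rep y = y]; split.
- by move=> y [].
- move=> x Ex; have [Erx xrx] := @xgetI _ 0 (C x) x (conj Ex (equiv_refl x)).
  by exists (rep x) => //; split => //; rewrite /rep -(C_eq _ _ xrx).
- by move=> v w [_ ev] [_ ew] vw; rewrite -ev -ew /rep (C_eq _ _ vw).
Qed.

Lemma outer_rat_saturation_null (V E : set R) : lstar V = 0%E ->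
  (forall x, E x -> exists2 v, V v & rat_equiv x v) -> lstar E = 0%E.
Proof.
move=> V0 EV.
pose S n := if (unpickle n : option rat) is Some q then translate (ratr q) V
            else set0.
have ES : E `<=` \bigcup_n S n.
  move=> x /EV [v Vv [q xv]]; exists (pickle q); first by [].
  by rewrite /S pickleK /translate /= -xv opprB addrC subrK.
apply/eqP; rewrite eq_le outer_measure_ge0 andbT.
apply: (le_trans (le_outer_measure lstar _ _ ES)).
apply: (le_trans (outer_measure_sigma_subadditive _ S)).
rewrite eseries0 // => n _ _; rewrite /S.
case: (unpickle n) => [q|]; last by rewrite outer_measure0.
exact: etrans (outer_translate (ratr q) V) V0.
Qed.

(* The translates of V by the rationals 1/(k+1) are disjoint and all lie in
   ]-b, b+1], so countable additivity forces lstar V = 0. *)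
Lemma caratheodory_rat_transversal_null (b : R) (V : set R) : 0 <= b ->
  V `<=` `]- b, b]%classic -> lstar.-caratheodory V ->
  (forall v w, V v -> V w -> rat_equiv v w -> v = w) -> lstar V = 0%E.
Proof.
move=> b0 Vb mV Vinj.
pose a (k : nat) : R := (k.+1%:R)^-1.
have a_rat k : a k = ratr (k.+1%:Q)^-1 by rewrite /a fmorphV /= ratr_nat.
have a_gt0 k : 0 < a k by rewrite /a invr_gt0 ltr0n.
have a_le1 k : a k <= 1 by rewrite /a invf_le1 ?ler1n ?ltr0n.
pose T k := translate (a k) V.
have mT k : measurable (T k : set (lebesgueR R)).
  exact/caratheodory_translate.
have tT : trivIset setT T.
  move=> i j _ _ [t [Vi Vj]].
  have : rat_equiv (t - a i) (t - a j).
    exists ((j.+1%:Q)^-1 - (i.+1%:Q)^-1).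
    by rewrite rmorphB /= -!a_rat opprB addrC addrA subrK.
  move/(Vinj _ _ Vi Vj) => /addrI /oppr_inj /invr_inj /eqP.
  by rewrite eqr_nat eqSS => /eqP.
have sumT : lstar (\bigcup_k T k) = (\sum_(0 <= i <oo) lstar (T i))%E :=
  measure_semi_bigcup (@completed_lebesgue_measure R) mT tT
    (bigcupT_measurable _ mT).
have UT_le : (lstar (\bigcup_k T k) <= (b + 1 - - b)%:E)%E.
  apply: (le_trans (le_outer_measure lstar _ `]- b, b + 1]%classic _)).
    move=> t [k _ /Vb]; rewrite /= !in_itv /= => /andP [h1 h2].
    have := a_gt0 k; have := a_le1 k => *; apply/andP; split; lra.
  rewrite -[X in (X <= _)%E]/(lebesgue_measure `]- b, b + 1]%classic).
  by rewrite lebesgue_measure_itv /= lte_fin ifT //; lra.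
apply: (@sum_cst_bounded_eq0 _ (b + 1 - - b)); first exact: outer_measure_ge0.
move=> N; apply: le_trans UT_le.
rewrite (eq_bigr (fun i => lstar (T i))); last by move=> i _; rewrite outer_translate.
by rewrite sumT; apply: nneseries_lim_ge => n _ _; exact: outer_measure_ge0.
Qed.

Lemma exists_nonmeasurable_subset (b : R) (E : set R) : 0 <= b ->
  E `<=` `]- b, b]%classic -> lstar E != 0%E ->
  exists2 V, V `<=` E & ~ lstar.-caratheodory V.
Proof.
move=> b0 Eb E0; have [V [VE EV Vinj]] := rat_transversal E.
exists V => // mV; move/eqP: E0; apply; apply: outer_rat_saturation_null EV.
exact: caratheodory_rat_transversal_null b0 (subset_trans VE Eb) mV Vinj.
Qed.

End translation.

Section null_sets.
Context {R : realType}.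
Local Notation lstar := ((wlength (R:=R) idfun)^*)%mu.

Lemma outer_null_subset {A N : set R} :
  A `<=` N -> lstar N = 0%E -> lstar A = 0%E.
Proof.
move=> AN N0; apply/eqP; rewrite eq_le outer_measure_ge0 andbT -N0.
exact: le_outer_measure.
Qed.

Lemma outer_null_caratheodory (A : set R) :
  lstar A = 0%E -> lstar.-caratheodory A.
Proof.
move=> A0 X; apply/eqP; rewrite eq_le (le_outer_measureIC lstar) /=.
rewrite (outer_null_subset (@subIsetr _ X A) A0) add0e.
by apply: le_outer_measure; exact: subIsetl.
Qed.

Lemma Lmeasurable_fun_null_support (f : R -> R) (N : set R) :
  lstar N = 0%E -> (forall t, ~ N t -> f t = 0) -> Lmeasurable_fun f.
Proof.
move=> N0 fN _ Y mY; rewrite setTI.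
have [Y0|Y0] := pselect (Y 0).
  have -> : f @^-1` Y = ~` (N `&` ~` (f @^-1` Y)).
    apply/seteqP; split => t /=; first by move=> Yt [_ []].
    move=> h; have [Nt|Nt] := pselect (N t); last by rewrite fN.
    by apply: contrapT => nY; apply: h.
  apply: (@measurableC _ (lebesgueR R)); apply: outer_null_caratheodory.
  exact: outer_null_subset (@subIsetl _ _ _) N0.
apply: outer_null_caratheodory; apply: outer_null_subset N0 => t /= Yt.
by apply: contrapT => Nt; apply: Y0; rewrite -(fN t Nt).
Qed.

Lemma exists_bounded_nonmeasurable_subset (U : set R) : lstar U != 0%E ->
  exists (b : R) (V : set R),
    [/\ V `<=` U, V `<=` `]- b, b]%classic & ~ lstar.-caratheodory V].
Proof.
move=> U0; pose S (n : nat) := U `&` `]- n%:R, n%:R]%classic.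
have [n Sn] : exists n, lstar (S n) != 0%E.
  apply: contrapT => /forallNP S0; move/negP: U0; apply.
  rewrite eq_le outer_measure_ge0 andbT.
  have US : U `<=` \bigcup_n S n.
    move=> t Ut; have := archi_boundP (normr_ge0 t).
    set k := Num.Def.archi_bound _ => tk; exists k => //; split => //=.
    by have [h1 h2] := ltr_normlP _ _ tk; rewrite in_itv /= ltrNl h1 ltW.
  apply: (le_trans (le_outer_measure lstar _ _ US)).
  apply: (le_trans (outer_measure_sigma_subadditive lstar S)).
  rewrite eseries0 // => k _ _.
  by have /negP := S0 k; rewrite negbK => /eqP.
have [V VS nV] := exists_nonmeasurable_subset _ _ (ler0n R n) (@subIsetr _ _ _) Sn.
by exists n%:R, V; split => // t /VS [].
Qed.

End null_sets.

Section chain_construction.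
Context {R : realType} {K : Type} (lt : K -> K -> Prop).
Local Notation lstar := ((wlength (R:=R) idfun)^*)%mu.
Variables (N : K -> set R) (V : set R) (b : R).
Hypotheses (N_null : forall a, Lnull (N a))
  (N_mono : forall a a', lt a a' -> N a `<=` N a')
  (V_cover : V `<=` \bigcup_a N a)
  (V_bounded : V `<=` `]- b, b]%classic)
  (V_nonmeas : ~ lstar.-caratheodory V).

(* Consecutive shifts differ by 2b + 2, more than the length of a cell, so the
   cells, each containing one copy of V, are pairwise disjoint. *)
Definition cell_shift (k : nat) : R := k%:R * (b * 2 + 2).
Definition cell (k : nat) := `]- b + cell_shift k, b + cell_shift k]%classic.
Definition Vcopies := [set t | exists k, V (t - cell_shift k)].
Definition Ncopies a := [set t | exists k, N a (t - cell_shift k)].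
Definition copy_index t := xget 0%N [set k | V (t - cell_shift k)].

Lemma Vcopy_cell {k t} : V (t - cell_shift k) -> cell k t.
Proof.
move=> /V_bounded; rewrite /cell /= !in_itv /= => /andP [h1 h2].
by apply/andP; split; lra.
Qed.

Lemma cell_unique {k k' t} : cell k t -> cell k' t -> k = k'.
Proof.
suff cell_le m m' : cell m t -> cell m' t -> (m <= m')%N.
  by move=> tk tk'; apply/eqP; rewrite eqn_leq !cell_le.
rewrite /cell /= !in_itv /= => /andP [h1 h2] /andP [h3 h4].
rewrite leqNgt; apply/negP => m'm.
have : cell_shift m' + (b * 2 + 2) <= cell_shift m.
  rewrite /cell_shift -[X in _ + X]mul1r -mulrDl ler_wpM2r ?natr1 ?ler_nat //.
  lra.
lra.
Qed.

Lemma copy_indexE {k t} : V (t - cell_shift k) -> copy_index t = k.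
Proof.
move=> Vk; apply: xget_unique => // k' Vk'.
exact: cell_unique (Vcopy_cell Vk') (Vcopy_cell Vk).
Qed.

Lemma Ncopies_null a : lstar (Ncopies a) = 0%E.
Proof.
have /negligible_outer_measure Na0 := N_null a.
apply/eqP; rewrite eq_le outer_measure_ge0 andbT.
have sub : Ncopies a `<=` \bigcup_k translate (cell_shift k) (N a).
  by move=> t [k h]; exists k.
apply: (le_trans (le_outer_measure lstar _ _ sub)).
apply: (le_trans (outer_measure_sigma_subadditive lstar _)).
rewrite eseries0 // => k _ _.
exact: etrans (outer_translate (cell_shift k) (N a)) Na0.
Qed.

Definition stage (Psi : nat -> R) (a : K) (t : R) : R :=
  if `[< Vcopies t /\ Ncopies a t >] then Psi (copy_index t) else 0.

Definition stage_limit (Psi : nat -> R) (t : R) : R :=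
  if `[< Vcopies t >] then Psi (copy_index t) else 0.

Lemma stage_measurable Psi a : Lmeasurable_fun (stage Psi a).
Proof.
apply: (Lmeasurable_fun_null_support _ _ (Ncopies_null a)) => t Nt.
by rewrite /stage; case: ifPn => // /asboolP [].
Qed.

Lemma stage_cvg Psi (a0 : K) t :
  kconverges lt (fun a => stage Psi a t) (stage_limit Psi t).
Proof.
move=> U /nbhs_singleton; rewrite /stage /stage_limit.
have [[k Vk]|Vt] := pselect (Vcopies t); last first.
  by rewrite asboolF // => U0; exists a0 => a _; rewrite asboolF // => -[].
have [a _ Nak] := V_cover _ Vk.
rewrite asboolT; last by exists k.
move=> Ut; exists a => a' aa'; rewrite asboolT //.
by split; exists k => //; exact: N_mono aa' _ Nak.
Qed.

Lemma cell_caratheodory k : lstar.-caratheodory (cell k).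
Proof. exact: (sub_caratheodory (wlength idfun) (measurable_itv _)). Qed.

(* On the cell of index d the limit is nonzero exactly on the d-th copy of V. *)
Lemma stage_limit_nonmeasurable Psi d :
  Psi d != 0 -> ~ Lmeasurable_fun (stage_limit Psi).
Proof.
move=> Psid mlim; apply: V_nonmeas; apply/(caratheodory_translate (cell_shift d)).
have -> : translate (cell_shift d) V =
    ([set: R] `&` stage_limit Psi @^-1` (~` [set 0])) `&` cell d.
  apply/seteqP; split => t.
    move=> Vt; split; last exact: Vcopy_cell.
    split => //; rewrite /preimage /= /stage_limit asboolT; last by exists d.
    by rewrite (copy_indexE Vt); exact/eqP.
  move=> [[_]]; rewrite /preimage /= /stage_limit.
  case: asboolP => [[k Vk] _ dt|_]; last by case.
  by rewrite /translate /= -(cell_unique (Vcopy_cell Vk) dt).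
apply: (@measurableI _ (lebesgueR R)); last exact: cell_caratheodory.
exact: mlim measurableT _ (measurableC (measurable_set1 0)).
Qed.

Lemma AN_stage Psi : stage Psi <> (fun _ _ => 0) -> AN lt (stage Psi).
Proof.
move=> stage_neq0.
have [a [t stage_at_neq0]] : exists a t, stage Psi a t != 0.
  apply: contrapT => stage0; apply: stage_neq0; apply: funext => a.
  apply: funext => t; apply: contrapT => /eqP stage_neq0'.
  by apply: stage0; exists a, t.
have [d Psid] : exists d, Psi d != 0.
  move: stage_at_neq0; rewrite /stage; case: ifP => _ Psi_neq0.
    by exists (copy_index t).
  by rewrite eqxx in Psi_neq0.
split; first exact: stage_measurable.
exists (stage_limit Psi); split; first exact: stage_limit_nonmeasurable Psid.
by apply: aeW => t'; exact: stage_cvg.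
Qed.

Lemma stage_at Psi a v d :
  V v -> N a v -> stage Psi a (v + cell_shift d) = Psi d.
Proof.
move=> Vv Nav; have Vd : V (v + cell_shift d - cell_shift d) by rewrite addrK.
by rewrite /stage asboolT ?(copy_indexE Vd) //; split; exists d; rewrite addrK.
Qed.

Definition generator (r : R) : K -> R -> R := stage (ratstep ^~ r).

Lemma peval_generator n (r : 'I_n -> R) (P : {mpoly R[n]}) : P@_0%MM = 0 ->
  peval P (generator \o r) = stage (fun d => P.@[fun i => ratstep d (r i)]).
Proof.
move=> P0; apply: funext => a; apply: funext => t.
by rewrite /peval /generator /stage /=; case: asboolP => _ //; rewrite meval_cst0.
Qed.

Lemma generator_interp n (r : 'I_n -> R) (w : 'I_n -> rat) : injective r ->
  exists a t, forall i, generator (r i) a t = ratr (w i).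
Proof.
move=> rinj; have [d rd] := ratstep_interp _ r w rinj.
have [v Vv] : exists v, V v.
  apply: contrapT => nV; apply: V_nonmeas; rewrite (_ : V = set0).
    exact: caratheodory_measurable_set0.
  by apply/seteqP; split => // x Vx; apply: nV; exists x.
have [a _ Nav] := V_cover _ Vv.
by exists a, (v + cell_shift d) => i; rewrite /generator stage_at.
Qed.

Lemma generator_inj : injective generator.
Proof.
move=> r1 r2 r12; apply: contrapT => /eqP r1_neq_r2.
have rinj : injective (fun i : 'I_2 => [:: r1; r2]`_i).
  by move=> i j /eqP; rewrite nth_uniq //= ?inE ?andbT // => /eqP /val_inj.
have [a [t rw]] := generator_interp _ _ (fun i => [:: 1%Q; 0%Q]`_i) rinj.
have := rw ord_max; have := rw ord0; rewrite /= r12 => ->.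
by rewrite rmorph0 rmorph1 => /eqP; rewrite oner_eq0.
Qed.

Lemma range_generator n (x : 'I_n -> K -> R -> R) :
  (forall i, range generator (x i)) -> exists r : 'I_n -> R, x = generator \o r.
Proof.
move=> xgen; have [r rx] : {r : 'I_n -> R & forall i, generator (r i) = x i}.
  by apply: (@choice _ _ (fun i ri => generator ri = x i)) => i;
    have [ri _ <-] := xgen i; exists ri.
by exists r; apply: funext => i; rewrite /= rx.
Qed.

Lemma generator_indep n (r : 'I_n -> R) (P : {mpoly R[n]}) :
  injective r -> P != 0 -> peval P (generator \o r) <> (fun _ _ => 0).
Proof.
move=> rinj P_neq0.
have [w Pw_neq0] : exists w : 'I_n -> rat, P.@[fun i => ratr (w i)] != 0.
  apply: contrapT => Pw0; move/eqP: P_neq0; apply; apply: mpoly_ratr_eq0 => w.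
  by apply: contrapT => /eqP Pw; apply: Pw0; exists w.
have [a [t rw]] := generator_interp _ _ w rinj.
move=> /(congr1 (fun f => f a t)); rewrite /peval /=.
by rewrite (meval_eq _ (v2 := fun i => ratr (w i))) // => /eqP; rewrite (negbTE Pw_neq0).
Qed.

Theorem AN_strongly_algebrable_of_chain : @strongly_algebrable R K R (AN lt).
Proof.
exists (range generator); split.
  by apply: inj_card_eq => r1 r2 _ _; exact: generator_inj.
split=> n x P.
  move=> x_inj /range_generator [r xr]; rewrite xr in x_inj *.
  by apply: generator_indep => // i j rij; apply: x_inj; rewrite /= rij.
move=> /range_generator [r ->] P0 nz.
by rewrite peval_generator // in nz *; exact: AN_stage.
Qed.

End chain_construction.

Section initial_segments.
Context {R : realType} {K : Type} (lt : K -> K -> Prop) (F : K -> set R).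

Lemma Lnull_bigcup_initial_segment a :
  card_is_addN R K -> ~ ([set: K] #<= [set b | lt b a])%card ->
  (forall b, Lnull (F b)) -> Lnull (\bigcup_(b in [set b | lt b a]) F b).
Proof.
move=> [_ small] seg_a F_null.
have : Lnull (\bigcup_(A in [set F b | b in [set b | lt b a]]) A).
  apply: small.
  - exact: card_le_trans (card_image_le _ _) (subset_card_le (@subsetT _ _)).
  - by move=> h; apply: seg_a; exact: card_le_trans h (card_image_le _ _).
  - by move=> A [b _ <-].
by apply: negligibleS => t [b ba Fbt]; exists (F b) => //; exists b.
Qed.

(* Only a maximal element of K can escape the union of the strict initial
   segments, and its F-set is null. *)
Lemma Lnull_bigcup_of_initial_segments :
  (forall a b, [\/ lt a b, a = b | lt b a]) -> (forall b, Lnull (F b)) ->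
  Lnull (\bigcup_a \bigcup_(b in [set b | lt b a]) F b) ->
  Lnull (\bigcup_a F a).
Proof.
move=> tri F_null U0.
have [[m m_max]|no_max] := pselect (exists m, forall b, ~ lt m b).
  apply: (negligibleS _ (negligibleU U0 (F_null m))) => t [b _ Fbt].
  case: (tri b m) => [bm|<-|mb]; last by case: (m_max b mb).
    by left; exists m => //; exists b.
  by right.
apply: (negligibleS _ U0) => t [b _ Fbt].
have [a ba] : exists a, lt b a.
  by apply: contrapT => nb; apply: no_max; exists b => c bc; apply: nb; exists c.
by exists a => //; exists b.
Qed.

End initial_segments.

Theorem mainTheorem15 (R : realType) (K : Type) (lt : K -> K -> Prop) :
  @initial_ordinal K lt -> @card_is_addN R K ->
  @strongly_algebrable R K R (@AN R K lt).
Proof.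
move=> [[_ lt_trans tri _] seg] addN; have [[F [F_null UF_nonnull]] _] := addN.
pose N a := \bigcup_(b in [set b | lt b a]) F b.
have N_mono a a' : lt a a' -> N a `<=` N a'.
  by move=> aa' t [b ba Fbt]; exists b => //; exact: lt_trans aa'.
have UN_nonnull : ((wlength idfun)^*)%mu (\bigcup_a N a) != 0%E.
  apply/eqP => /negligible_outer_measure UN0; apply: UF_nonnull.
  exact: Lnull_bigcup_of_initial_segments tri F_null UN0.
have [b [V [VN Vb V_nonmeas]]] := exists_bounded_nonmeasurable_subset _ UN_nonnull.
apply: (AN_strongly_algebrable_of_chain lt N V b _ N_mono VN Vb V_nonmeas).
by move=> a; exact: Lnull_bigcup_initial_segment addN (seg a) F_null.
Qed.
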